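(* Every weakly amenable dual Banach algebra is weakly Connes amenable.
   Context: A dual Banach algebra is a Banach algebra $\mathfrak{A}$ which is the dual of a Banach space $\mathfrak{A}_*$ and whose multiplication is separately $w^*$-continuous. A derivation $D:\mathfrak{A}\to F$ into a Banach $\mathfrak{A}$-bimodule $F$ is a continuous linear map with $D(ab)=D(a)\cdot b+a\cdot D(b)$; it is inner if $D(a)=a\cdot x-x\cdot a$ for some $x\in F$. $\mathfrak{A}$ is weakly amenable if every derivation $\mathfrak{A}\to\mathfrak{A}^*$ is inner. For a Banach $\mathfrak{A}$-bimodule $E$, $\sigma wc(E)$ is the set of $x\in E$ such that $a\mapsto a\cdot x$ and $a\mapsto x\cdot a$ are continuous from $(\mathfrak{A},w^* )$ to $(E,\sigma(E,E^* ))$; it is a closed submodule. Let $j_{\mathfrak{A}}:\mathfrak{A}^*\to\sigma wc(\mathfrak{A})^*$ be the adjoint of the inclusion $\sigma wc(\mathfrak{A})\hookrightarrow\mathfrak{A}$. $\mathfrak{A}$ is weakly Connes amenable if for every derivation $D:\mathfrak{A}\to\mathfrak{A}^*$ such that $j_{\mathfrak{A}}\circ D:\mathfrak{A}\to\sigma wc(\mathfrak{A})^*$ is $w^*$-$w^*$ continuous, the derivation $j_{\mathfrak{A}}\circ D$ is inner. *)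

From HB Require Import structures.
From mathcomp Require Import all_boot all_order all_algebra.
From mathcomp Require Import all_classical all_reals all_analysis.
Set Implicit Arguments. Unset Strict Implicit. Unset Printing Implicit Defensive.
Import Order.TTheory GRing.Theory Num.Theory.
Import numFieldNormedType.Exports.
Local Open Scope classical_set_scope.
Local Open Scope ring_scope.

(* Scalars: an arbitrary numFieldType K (covers R and C). *)

Section DualBanach.
Variables (K : numFieldType).

Definition lin_functional (V : lmodType K) (f : V -> K) :=
  forall (k : K) (x y : V), f (k *: x + y) = k * f x + f y.

Definition in_dual (V : normedModType K) (f : V -> K) :=
  lin_functional f /\ continuous f.

Variables (A : completeNormedModType K) (P : completeNormedModType K).
Variable (mul : A -> A -> A).
Variable (pair : A -> P -> K).

Definition banach_algebra :=
  (forall a b c, mul a (mul b c) = mul (mul a b) c) /\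
  (forall k a b c, mul (k *: a + b) c = k *: mul a c + mul b c) /\
  (forall k a b c, mul a (k *: b + c) = k *: mul a b + mul a c) /\
  (forall a b, `|mul a b| <= `|a| * `|b|).

(* pair identifies A isometrically with the dual P^* of the Banach space P *)
Definition is_predual :=
  (forall a, lin_functional (pair a)) /\
  (forall p k a b, pair (k *: a + b) p = k * pair a p + pair b p) /\
  (forall a p, `|pair a p| <= `|a| * `|p|) /\
  (forall a (e : K), 0 < e -> exists p, `|p| <= 1 /\ `|a| - e < `|pair a p|) /\
  (forall f : P -> K, in_dual f -> exists a, forall p, pair a p = f p).

Definition wstar_cvg (F : set_system A) (a : A) :=
  forall p, (fun b => pair b p) @ F --> pair a p.

Definition weak_cvg (F : set_system A) (a : A) :=
  forall f : A -> K, in_dual f -> f @ F --> f a.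

Definition wstar_wstar_continuous (g : A -> A) :=
  forall (F : set_system A) a, Filter F -> wstar_cvg F a -> wstar_cvg (g @ F) (g a).

Definition wstar_weak_continuous (g : A -> A) :=
  forall (F : set_system A) a, Filter F -> wstar_cvg F a -> weak_cvg (g @ F) (g a).

Definition dual_banach_algebra :=
  banach_algebra /\ is_predual /\
  (forall a, wstar_wstar_continuous (mul a)) /\
  (forall a, wstar_wstar_continuous (fun b => mul b a)).

(* A map D : A -> A^*, written curried: D a is the functional b |-> D a b.
   D is a (bounded) derivation into A^* with its canonical bimodule structure
   (a.f)(b) = f(b a), (f.a)(b) = f(a b). *)
Definition derivation_to_dual (D : A -> A -> K) :=
  (forall a, lin_functional (D a)) /\
  (forall k a b c, D (k *: a + b) c = k * D a c + D b c) /\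
  (exists M : K, forall a b, `|D a b| <= M * `|a| * `|b|) /\
  (forall a b c, D (mul a b) c = D a (mul b c) + D b (mul c a)).

Definition inner_to_dual (D : A -> A -> K) :=
  exists f : A -> K, in_dual f /\ forall a c, D a c = f (mul c a) - f (mul a c).

Definition weakly_amenable :=
  forall D, derivation_to_dual D -> inner_to_dual D.

Definition sigma_wc : set A :=
  [set x | wstar_weak_continuous (fun a => mul a x) /\
           wstar_weak_continuous (fun a => mul x a)].

(* phi : A -> K restricted to sigma_wc(A) is an element of sigma_wc(A)^* *)
Definition in_sigma_wc_dual (phi : A -> K) :=
  (forall k x y, sigma_wc x -> sigma_wc y ->
     phi (k *: x + y) = k * phi x + phi y) /\
  (exists M : K, forall x, sigma_wc x -> `|phi x| <= M * `|x|).

(* j_A o D : A -> sigma_wc(A)^* is w*-w* continuous *)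
Definition jD_wstar_continuous (D : A -> A -> K) :=
  forall (F : set_system A) a, Filter F -> wstar_cvg F a ->
    forall x, sigma_wc x -> (fun b => D b x) @ F --> D a x.

(* j_A o D is inner as a derivation into sigma_wc(A)^* *)
Definition jD_inner (D : A -> A -> K) :=
  exists phi : A -> K, in_sigma_wc_dual phi /\
    forall a x, sigma_wc x -> D a x = phi (mul x a) - phi (mul a x).

Definition weakly_connes_amenable :=
  forall D, derivation_to_dual D -> jD_wstar_continuous D -> jD_inner D.

End DualBanach.

From HB Require Import structures.
From mathcomp Require Import all_boot all_order all_algebra.
From mathcomp Require Import all_classical all_reals all_analysis.
Import Order.TTheory GRing.Theory Num.Theory.
Import numFieldNormedType.Exports.
Local Open Scope ring_scope.

(* If D is implemented by f in A^*, then j_A o D is implemented by the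
   restriction j_A f of f to sigma wc(A). *)

Lemma in_dual_bounded {K : numFieldType} {V : normedModType K} {f : V -> K} :
  in_dual f -> exists M : K, forall x, `|f x| <= M * `|x|.
Proof.
move=> [lf cf].
pose fl : {linear V -> K^o} :=
  HB.pack f (GRing.isLinear.Build K V K^o *:%R f lf).
have /linear_bounded_continuous/linear_boundedP[M [_ HM]] : continuous fl
  by [].
by exists (M + 1) => x; apply: HM; rewrite ltrDl.
Qed.

Section Restriction.
Variables (K : numFieldType) (A P : completeNormedModType K).
Variables (mul : A -> A -> A) (pair : A -> P -> K).

Lemma in_dual_in_sigma_wc_dual (f : A -> K) :
  in_dual f -> in_sigma_wc_dual mul pair f.
Proof.
move=> fA; have [lf _] := fA; split; first by move=> k x y _ _; exact: lf.
by have [M HM] := in_dual_bounded fA; exists M => x _; exact: HM.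
Qed.

Lemma inner_to_dual_jD_inner (D : A -> A -> K) :
  inner_to_dual mul D -> jD_inner mul pair D.
Proof.
move=> [f [fA innerD]]; exists f; split.
  exact: in_dual_in_sigma_wc_dual.
by move=> a x _; exact: innerD.
Qed.

End Restriction.

Theorem theorem3p6 (K : numFieldType) (A P : completeNormedModType K)
  (mul : A -> A -> A) (pair : A -> P -> K) :
  dual_banach_algebra mul pair ->
  weakly_amenable mul ->
  weakly_connes_amenable mul pair.
Proof.
move=> _ WA D derD _.
exact: inner_to_dual_jD_inner (WA D derD).
Qed.
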